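(* For every CFTR program $\mathtt{p}$ there is a polynomial $\pi$ such that for every input $x\in\{0,1\}^*$ on which $\mathtt{p}$ terminates, $\mathit{time}_{\mathtt{p}}(x) \le \pi(|x|)$.
   Context: CF (''cons-free'') is a first-order, call-by-value functional language over booleans and bit lists $\{0,1\}^*$. A program is a finite sequence of mutually recursive function definitions $\mathtt{f\ x1 \dots xm = e}$ ($m\ge0$), the first being a one-argument entry function. Expressions are $\mathtt{True}$, $\mathtt{False}$, $\mathtt{[]}$, variables, base calls $\mathtt{not\ e}$, $\mathtt{null\ e}$, $\mathtt{head\ e}$, $\mathtt{tail\ e}$, conditionals $\mathtt{if\ e_0\ then\ e_1\ else\ e_2}$, and calls $\mathtt{f\ e_1\dots e_m}$ of defined functions; there are no list constructors. Semantics is standard big-step call-by-value evaluation given by inference rules deriving $\mathtt{p},\rho\vdash\mathtt{e}\to v$; the derivation tree for the run on input $x$ is the computation tree $\mathcal{T}^{\mathtt{p},x}$, and the native running time $\mathit{time}_{\mathtt{p}}(x)$ is the number of nodes of $\mathcal{T}^{\mathtt{p},x}$. Tail form is defined via $\alpha:\mathrm{Exp}\to\{X,T,N\}$ with order $X<T<N$: $\alpha(\text{constant or variable})=X$; $\alpha(\mathtt{base\ e})=X$ if $\alpha(\mathtt{e})=X$, else $N$; $\alpha(\mathtt{f\ e_1\dots e_m})=T$ if all $\alpha(\mathtt{e_i})=X$, else $N$; $\alpha(\mathtt{if\ e_0\ then\ e_1\ else\ e_2})=\max(\alpha(\mathtt{e_1}),\alpha(\mathtt{e_2}))$ if $\alpha(\mathtt{e_0})=X$,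 else $N$. A CFTR program is a CF program in which every function definition $\mathtt{f\ x1\dots xm=e}$ has $\alpha(\mathtt{e})\in\{X,T\}$. *)

From HB Require Import structures.
From mathcomp Require Import all_boot all_order all_algebra.
Set Implicit Arguments. Unset Strict Implicit. Unset Printing Implicit Defensive.

(* Values: booleans True/False and bit lists in {0,1}^* (bit 0 = false, 1 = true). *)
Inductive value : Type :=
| VB : bool -> value
| VL : seq bool -> value.

(* Variables are referred to by their position (0-based) in the
   parameter list x1 ... xm of the enclosing definition; defined functions are
   referred to by their position (0-based) in the program. *)
Inductive expr : Type :=
| ETrue : expr
| EFalse : expr
| ENil : expr
| EVar : nat -> expr
| ENot : expr -> expr
| ENull : expr -> expr
| EHead : expr -> expr
| ETail : expr -> expr
| EIf : expr -> expr -> expr -> expr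
| ECall : nat -> seq expr -> expr.

(* A program: a finite sequence of definitions  f x1 .. xm = e, given as (m, e). *)
Definition prog := seq (nat * expr).

Fixpoint wf_expr (ar : seq nat) (m : nat) (e : expr) : bool :=
  match e with
  | ETrue | EFalse | ENil => true
  | EVar i => i < m
  | ENot e | ENull e | EHead e | ETail e => wf_expr ar m e
  | EIf e0 e1 e2 => [&& wf_expr ar m e0, wf_expr ar m e1 & wf_expr ar m e2]
  | ECall f args =>
      [&& f < size ar, nth 0 ar f == size args &
        (fix wfl (l : seq expr) : bool :=
           match l with nil => true | a :: l' => wf_expr ar m a && wfl l' end) args]
  end.

Definition wf_prog (p : prog) : bool :=
  match p with
  | nil => false
  | (m, _) :: _ => (m == 1) && all (fun d => wf_expr (map fst p) d.1 d.2) p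
  end.

(* Big-step call-by-value semantics. [eval p rho e v n] says that there is a
   derivation tree of  p, rho |- e -> v  with exactly n nodes. *)
Inductive eval (p : prog) : seq value -> expr -> value -> nat -> Prop :=
| ev_true rho : eval p rho ETrue (VB true) 1
| ev_false rho : eval p rho EFalse (VB false) 1
| ev_nil rho : eval p rho ENil (VL [::]) 1
| ev_var rho i v : onth rho i = Some v -> eval p rho (EVar i) v 1
| ev_not rho e b n : eval p rho e (VB b) n -> eval p rho (ENot e) (VB (~~ b)) n.+1
| ev_null rho e l n : eval p rho e (VL l) n -> eval p rho (ENull e) (VB (nilp l)) n.+1
| ev_head rho e b l n : eval p rho e (VL (b :: l)) n -> eval p rho (EHead e) (VB b) n.+1
| ev_tail rho e b l n : eval p rho e (VL (b :: l)) n -> eval p rho (ETail e) (VL l) n.+1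
| ev_if_true rho e0 e1 e2 v n0 n1 :
    eval p rho e0 (VB true) n0 -> eval p rho e1 v n1 ->
    eval p rho (EIf e0 e1 e2) v (n0 + n1).+1
| ev_if_false rho e0 e1 e2 v n0 n2 :
    eval p rho e0 (VB false) n0 -> eval p rho e2 v n2 ->
    eval p rho (EIf e0 e1 e2) v (n0 + n2).+1
| ev_call rho f args m body vs ns v n :
    onth p f = Some (m, body) -> size args = m ->
    eval_list p rho args vs ns ->
    eval p vs body v n ->
    eval p rho (ECall f args) v (ns + n).+1
with eval_list (p : prog) : seq value -> seq expr -> seq value -> nat -> Prop :=
| evl_nil rho : eval_list p rho [::] [::] 0
| evl_cons rho e es v vs n ns :
    eval p rho e v n -> eval_list p rho es vs ns ->
    eval_list p rho (e :: es) (v :: vs) (n + ns).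

(* The run of p on input x: the computation tree is the derivation of the body
   of the entry function in the environment [x1 |-> x]; it has time nodes.
   p terminates on x iff such a derivation exists. *)
Definition run (p : prog) (x : seq bool) (v : value) (time : nat) : Prop :=
  exists body, exists rest, p = (1, body) :: rest /\ eval p [:: VL x] body v time.

(* Tail-form analysis alpha : Exp -> {X, T, N}, with order X < T < N. *)
Inductive tag : Type := X | T | N.

Definition tag_max (a b : tag) : tag :=
  match a, b with
  | N, _ | _, N => N
  | T, _ | _, T => T
  | X, X => X
  end.

Fixpoint alpha (e : expr) : tag :=
  match e with
  | ETrue | EFalse | ENil | EVar _ => X
  | ENot e | ENull e | EHead e | ETail e =>
      match alpha e with X => X | _ => N end
  | EIf e0 e1 e2 =>
      match alpha e0 with X => tag_max (alpha e1) (alpha e2) | _ => N end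
  | ECall _ args =>
      if (fix allX (l : seq expr) : bool :=
            match l with
            | nil => true
            | a :: l' => match alpha a with X => allX l' | _ => false end
            end) args
      then T else N
  end.

Definition tail_form (e : expr) : bool :=
  match alpha e with X | T => true | N => false end.

Definition CFTR (p : prog) : Prop :=
  wf_prog p /\ all (fun d => tail_form d.2) p.

(* No CF expression builds new lists, so every list value arising in a run on
   input x is a suffix of x: values range over the |x| + 3 elements of
   [values_of x], and a call state (f, v1 ... vm) over at most
   |p| (|x| + 3)^A possibilities, A the maximal arity.  In a CFTR program the
   derivation of a function body is a chain of tail calls, each link adding at
   most B nodes, B the maximal body size.  Evaluation is deterministic and the
   derivations along the chain strictly shrink, so no call state occurs twice;
   hence time <= B |p| (|x| + 3)^A, a polynomial in |x|. *)
From Pilot Require Import Defs.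
From HB Require Import structures.
From mathcomp Require Import all_boot all_order all_algebra.
From mathcomp Require Import zify.
Import GRing.Theory Num.Theory.
Set Implicit Arguments. Unset Strict Implicit. Unset Printing Implicit Defensive.

Definition value_sum (v : value) : bool + seq bool :=
  match v with VB b => inl b | VL l => inr l end.
Definition sum_value (s : bool + seq bool) : value :=
  match s with inl b => VB b | inr l => VL l end.
Lemma value_sumK : cancel value_sum sum_value. Proof. by case. Qed.
HB.instance Definition _ := Equality.copy value (can_type value_sumK).

Definition suffix_value (x : seq bool) (v : value) : bool :=
  if v is VL l then suffix l x else true.

Definition values_of (x : seq bool) : seq value :=
  [:: VB true, VB false & [seq VL (drop k x) | k <- iota 0 (size x).+1]].

Lemma size_values_of x : size (values_of x) = size x + 3.
Proof. by rewrite /= size_map size_iota addn3. Qed.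

Lemma mem_values_of x v : (v \in values_of x) = suffix_value x v.
Proof.
case: v => [b|l]; first by case: b.
rewrite /values_of 2!in_cons 2!orFb.
apply/mapP/idP => [[k _ [->]]|suff_l]; first exact: suffix_drop.
exists (size x - size l); first by rewrite mem_iota; lia.
by move: suff_l; rewrite /= suffixE => /eqP ->.
Qed.

Fixpoint words (A : Type) (s : seq A) (m : nat) : seq (seq A) :=
  if m is m'.+1 then [seq a :: w | a <- s, w <- words s m'] else [:: [::]].

Lemma size_words (A : Type) (s : seq A) m : size (words s m) = size s ^ m.
Proof. by elim: m => [|m IH] //=; rewrite size_allpairs IH expnS. Qed.

Lemma mem_words (A : eqType) (s : seq A) w :
  all (mem s) w -> w \in words s (size w).
Proof.
elim: w => [|a w IH] /=; first by rewrite mem_seq1.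
by case/andP => Ha /IH Hw; apply: (allpairs_f (fun a w => a :: w)).
Qed.

Scheme eval_mind := Minimality for eval Sort Prop
with eval_list_mind := Minimality for eval_list Sort Prop.
Combined Scheme eval_mutind from eval_mind, eval_list_mind.

Lemma eval_det (p : prog) :
  (forall rho e v n, eval p rho e v n ->
     forall v' n', eval p rho e v' n' -> v = v' /\ n = n') /\
  (forall rho es vs ns, eval_list p rho es vs ns ->
     forall vs' ns', eval_list p rho es vs' ns' -> vs = vs' /\ ns = ns').
Proof.
(* The minimality scheme also hands over the premise derivations; dropping
   those already covered by an induction hypothesis leaves the second
   derivation as the only one to invert. *)
apply: eval_mutind; intros;
  repeat match goal with
  | H : eval _ ?r ?e ?v ?n,
    _ : forall v' n', eval _ ?r ?e v' n' -> ?v = v' /\ ?n = n' |- _ => clear H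
  | H : eval_list _ ?r ?e ?v ?n,
    _ : forall v' n', eval_list _ ?r ?e v' n' -> ?v = v' /\ ?n = n' |- _ => clear H
  end;
  match goal with
  | H : eval _ _ _ ?v' ?n' |- _ = ?v' /\ _ = ?n' => inversion H; subst; clear H
  | H : eval_list _ _ _ ?v' ?n' |- _ = ?v' /\ _ = ?n' => inversion H; subst; clear H
  end;
  repeat match goal with
  | IH : forall v' n', eval _ ?r ?e v' n' -> _, H : eval _ ?r ?e _ _ |- _ =>
      case: (IH _ _ H) => Ev En; clear H; try injection Ev; intros; subst
  | IH : forall v' n', eval_list _ ?r ?e v' n' -> _, H : eval_list _ ?r ?e _ _ |- _ =>
      case: (IH _ _ H) => *; clear H; subst
  | H1 : onth ?s ?f = Some _, H2 : onth ?s ?f = Some _ |- _ =>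
      rewrite H1 in H2; injection H2; intros; subst
  end; try congruence; auto.
Qed.

Fixpoint esize (e : expr) : nat :=
  match e with
  | ETrue | EFalse | ENil | EVar _ => 1
  | ENot e | ENull e | EHead e | ETail e => (esize e).+1
  | EIf e0 e1 e2 => (esize e0 + esize e1 + esize e2).+1
  | ECall _ args => (sumn (map esize args)).+1
  end.

Fixpoint allX (es : seq expr) : bool :=
  if es is e :: es' then (if alpha e is X then allX es' else false) else true.

Lemma alpha_call f args : alpha (ECall f args) = if allX args then T else N.
Proof. by []. Qed.

(* [match t with X => X | _ => N end] is the clause of [alpha] for the base
   functions [not], [null], [head] and [tail]. *)
Lemma unary_tag_eqX (t : Defs.tag) : match t with X => X | _ => N end = X -> t = X.
Proof. by case: t. Qed.

Lemma unary_tag_neqN (t : Defs.tag) : match t with X => X | _ => N end <> N -> t = X.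
Proof. by case: t => // /(_ erefl). Qed.

Lemma alpha_if_eqX e0 e1 e2 : alpha (EIf e0 e1 e2) = X ->
  [/\ alpha e0 = X, alpha e1 = X & alpha e2 = X].
Proof. by rewrite /=; case: (alpha e0); case: (alpha e1); case: (alpha e2). Qed.

Lemma alpha_if_neqN e0 e1 e2 : alpha (EIf e0 e1 e2) <> N ->
  [/\ alpha e0 = X, alpha e1 <> N & alpha e2 <> N].
Proof.
by rewrite /=; case: (alpha e0); case: (alpha e1); case: (alpha e2) => // /(_ erefl).
Qed.

Lemma onth_mem (A : eqType) (s : seq A) i a : onth s i = Some a -> a \in s.
Proof. by move=> sia; apply/onthP; exists i. Qed.

Section Evaluation.
Variables (p : prog) (x : seq bool).

Lemma eval_simple rho e v n : eval p rho e v n -> alpha e = X ->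
  all (suffix_value x) rho -> n <= esize e /\ suffix_value x v.
Proof.
elim=> {rho e v n}.
- by [].
- by [].
- by move=> *; rewrite /= suffix0s.
- by move=> rho i v /onth_mem rho_v _ /allP/(_ v rho_v).
- by move=> rho e b n _ IH /unary_tag_eqX E /(IH E) [].
- by move=> rho e l n _ IH /unary_tag_eqX E /(IH E) [].
- by move=> rho e b l n _ IH /unary_tag_eqX E /(IH E) [].
- move=> rho e b l n _ IH /unary_tag_eqX E /(IH E) [n_le suff_bl].
  by split=> //; apply: suffix_trans suff_bl; apply: suffix_cons.
- move=> rho e0 e1 e2 v n0 n1 _ IH0 _ IH1 /alpha_if_eqX [E0 E1 _] good.
  by have [? _] := IH0 E0 good; have [? ?] := IH1 E1 good; split=> //=; lia.
- move=> rho e0 e1 e2 v n0 n2 _ IH0 _ IH2 /alpha_if_eqX [E0 _ E2] good.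
  by have [? _] := IH0 E0 good; have [? ?] := IH2 E2 good; split=> //=; lia.
- move=> rho f args m body vs ns v n _ _ _ _ _.
  by rewrite alpha_call; case: allX.
Qed.

Lemma eval_simple_list rho es vs ns : eval_list p rho es vs ns -> allX es ->
  all (suffix_value x) rho ->
  [/\ ns <= sumn (map esize es), all (suffix_value x) vs & size vs = size es].
Proof.
elim=> {rho es vs ns} // rho e es v vs n ns He _ IH /=.
case E: (alpha e) => // /IH /[swap] good /(_ good) [ns_le good_vs ->].
by have [n_le good_v] := eval_simple He E good; rewrite good_v good_vs; split=> //; lia.
Qed.

Definition runs_in (s : nat * seq value) (n : nat) : Prop :=
  exists m body v,
    [/\ onth p s.1 = Some (m, body), size s.2 = m & eval p s.2 body v n].

Lemma runs_in_det s n n' : runs_in s n -> runs_in s n' -> n = n'.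
Proof.
case=> m [body [v [ps_mb _ Hn]]] [m' [body' [v' [ps_mb' _ Hn']]]].
move: ps_mb'; rewrite ps_mb => -[_ eq_body]; subst body'.
by have [_ ->] := (eval_det p).1 _ _ _ _ Hn _ _ Hn'.
Qed.

Lemma eval_tail rho e v n : eval p rho e v n -> alpha e <> N ->
  all (suffix_value x) rho ->
  n <= esize e \/ exists s n', [/\ runs_in s n', all (suffix_value x) s.2,
                                    n' < n & n <= n' + esize e].
Proof.
elim=> {rho e v n}; try by left.
- by move=> rho e b n He _ /unary_tag_neqN E /(eval_simple He E) []; left.
- by move=> rho e l n He _ /unary_tag_neqN E /(eval_simple He E) []; left.
- by move=> rho e b l n He _ /unary_tag_neqN E /(eval_simple He E) []; left.
- by move=> rho e b l n He _ /unary_tag_neqN E /(eval_simple He E) []; left.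
- move=> rho e0 e1 e2 v n0 n1 He0 _ _ IH1 /alpha_if_neqN [E0 E1 _] good.
  have [n0_le _] := eval_simple He0 E0 good.
  case: (IH1 E1 good) => [n1_le|[s [n' [run_s good_s lt_n' le_n]]]].
    by left => /=; lia.
  by right; exists s, n'; split=> //=; lia.
- move=> rho e0 e1 e2 v n0 n2 He0 _ _ IH2 /alpha_if_neqN [E0 _ E2] good.
  have [n0_le _] := eval_simple He0 E0 good.
  case: (IH2 E2 good) => [n2_le|[s [n' [run_s good_s lt_n' le_n]]]].
    by left => /=; lia.
  by right; exists s, n'; split=> //=; lia.
- move=> rho f args m body vs ns v n ps_f size_args Hargs Hbody _.
  rewrite alpha_call; case E: allX => // _ good.
  have [ns_le good_vs size_vs] := eval_simple_list Hargs E good.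
  right; exists (f, vs), n; split=> //=; try lia.
  by exists m, body, v; split=> //; rewrite size_vs.
Qed.
End Evaluation.

Lemma onth_all (A : Type) (P : pred A) (s : seq A) i a :
  all P s -> onth s i = Some a -> P a.
Proof.
elim: s i => [|b s IH] [|i] //=; first by case/andP=> ? _ [<-].
by case/andP=> _ /IH; apply.
Qed.

Definition states (p : prog) (x : seq bool) : seq (nat * seq value) :=
  [seq (f, vs) | f <- iota 0 (size p),
                 vs <- words (values_of x) (nth 0 (map fst p) f)].

Lemma runs_in_states p x s n : runs_in p s n -> all (suffix_value x) s.2 ->
  s \in states p x.
Proof.
case: s => f vs [m [body [v [/= ps_f size_vs _]]]] good_vs.
have f_lt : f < size p by rewrite -onthTE ps_f.
apply/allpairsPdep; exists f, vs; split => //; first by rewrite mem_iota.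
rewrite (nth_map (0, ETrue)) // (onth_nth _ _ _ _ ps_f) /= -size_vs.
by apply: mem_words; apply/allP => w /(allP good_vs); rewrite -mem_values_of.
Qed.

Lemma size_states p x :
  size (states p x) <= size p * (size x + 3) ^ \max_(m <- map fst p) m.
Proof.
set A := \max_(m <- _) m.
rewrite size_allpairs_dep sumnE big_map.
have -> : size p * (size x + 3) ^ A = \sum_(f <- iota 0 (size p)) (size x + 3) ^ A.
  by rewrite big_const_seq count_predT size_iota iter_addn_0 mulnC.
rewrite big_seq [X in _ <= X]big_seq; apply: leq_sum => f f_in.
rewrite size_words size_values_of leq_pexp2l ?addn3 //.
apply: leq_bigmax_seq => //; apply: mem_nth.
by move: f_in; rewrite size_map mem_iota.
Qed.

Section TailCallChain.
Variables (p : prog) (x : seq bool).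
Hypothesis tail_p : all (fun d => tail_form d.2) p.
Let B := \max_(k <- [seq esize d.2 | d <- p]) k.

Lemma tail_call_chain n s : runs_in p s n -> all (suffix_value x) s.2 ->
  exists L, [/\ uniq L, {subset L <= states p x}, n <= B * size L &
                forall s', s' \in L -> exists2 n', runs_in p s' n' & n' <= n].
Proof.
elim/ltn_ind: n s => n IH s run_s good_s.
have [m [body [v [ps_f _ Hbody]]]] := run_s.
have body_le : esize body <= B.
  by apply: leq_bigmax_seq => //; apply: (@onth_mem _ _ s.1); rewrite onth_map ps_f.
have tail_body : alpha body <> N.
  by have := onth_all tail_p ps_f; rewrite /tail_form /=; case: (alpha body).
have s_in := runs_in_states run_s good_s.
case: (eval_tail (x := x) Hbody tail_body good_s)
  => [n_le|[s' [n' [run_s' good_s' lt_n' le_n]]]].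
  exists [:: s]; split=> //.
  - by move=> s''; rewrite inE => /eqP ->.
  - by rewrite muln1; apply: leq_trans body_le.
  - by move=> s''; rewrite inE => /eqP ->; exists n.
have [L [uniq_L sub_L le_L prev_L]] := IH n' lt_n' s' run_s' good_s'.
have s_notin : s \notin L.
  by apply/negP => /prev_L [n'' /(runs_in_det run_s) <-]; rewrite leqNgt lt_n'.
exists (s :: L); split => /=.
- by rewrite s_notin.
- by move=> s''; rewrite inE => /predU1P [->|/sub_L].
- by rewrite mulnS addnC; apply: leq_trans le_n (leq_add le_L body_le).
- move=> s''; rewrite inE => /predU1P [->|/prev_L [n'' run_n'' le_n'']].
    by exists n.
  by exists n''; last lia.
Qed.

Lemma tail_time_bound n s : runs_in p s n -> all (suffix_value x) s.2 ->
  n <= B * size (states p x).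
Proof.
move=> run_s good_s; have [L [uniq_L sub_L le_L _]] := tail_call_chain run_s good_s.
by apply: leq_trans le_L _; rewrite leq_mul2l uniq_leq_size ?orbT.
Qed.

End TailCallChain.

Theorem theorem3 (p : prog) :
  CFTR p ->
  exists pi : {poly int},
    forall (x : seq bool) (v : value) (time : nat),
      run p x v time -> (time%:Z <= pi.[(size x)%:Z])%R.
Proof.
case=> _ tail_p.
set A := \max_(m <- map fst p) m.
set B := \max_(k <- [seq esize d.2 | d <- p]) k.
exists ((B * size p)%:R%:P * ('X + 3%:P) ^+ A)%R.
move=> x v time [body [rest [p_def Hbody]]].
have run0 : runs_in p (0, [:: VL x]) time.
  by exists 1, body, v; split; rewrite // p_def.
have good0 : all (suffix_value x) [:: VL x] by rewrite /= suffix_refl.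
have time_le : time <= B * size p * (size x + 3) ^ A.
  rewrite -mulnA; apply: leq_trans (tail_time_bound tail_p run0 good0) _.
  by rewrite leq_mul2l size_states orbT.
rewrite hornerM hornerC horner_exp hornerD hornerX hornerC.
by rewrite -PoszD -!natz -natrX -natrM ler_nat.
Qed.
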